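(* Let $\delta\in(0,1)$ and an even integer $n_{\mathrm{in}}\ge2$ be given, let $b_1,b_2,\dots>0$, $b_{\max,i}:=\max_{j\le i}b_j$, and $a_i:=b_ib_{\max,i}(\frac12+\log(2n_{\mathrm{in}}/\delta))$. Define $\sigma_0^2:=0$ and, for $i\ge1$, $$\sigma_i^2:=\sigma_{i-1}^2+b_i^2\Big(1+\frac{\sigma_{i-1}^2}{a_i^2}(b_i^2-2a_i)\Big)_+ .$$ Then for each $i\ge1$, $$\sigma_i^2\le c_i:=\max_{j\in[i]}\max(b_j^2,r_j),\qquad\text{where } r_i:=\frac{a_i^2}{2a_i-b_i^2}\le\frac{a_i^2}{2a_i-b_ib_{\max,i}}.$$
   Context: $(x)_+=\max(x,0)$. (In the paper $b_i=\|\mathbf{k}(x_{2i-1},\cdot)-\mathbf{k}(x_{2i},\cdot)\|_{\mathbf{k}}$ and $a_i$ are the quantities of the Kernel Halving algorithm, and $\sigma_i$ are the sub-Gaussian constants of the associated self-balancing Hilbert walk.) *)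

From mathcomp Require Import all_boot all_order all_algebra.
From mathcomp Require Import all_classical all_reals all_analysis.
Set Implicit Arguments. Unset Strict Implicit. Unset Printing Implicit Defensive.
Import Order.TTheory GRing.Theory Num.Theory.
Local Open Scope ring_scope.

Section KH.
Variables (R : realType) (delta : R) (nin : nat) (b : nat -> R).

(* sequences are indexed from 1; the value b 0 is never used *)
Definition bmax (i : nat) : R := \big[Num.max/0]_(1 <= j < i.+1) b j.

Definition aKH (i : nat) : R :=
  b i * bmax i * (2^-1 + ln (2 * nin%:R / delta)).

Fixpoint sigma2 (i : nat) : R :=
  match i with
  | 0 => 0
  | k.+1 => sigma2 k + b k.+1 ^+ 2 *
      Num.max 0 (1 + sigma2 k / aKH k.+1 ^+ 2 * (b k.+1 ^+ 2 - 2 * aKH k.+1))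
  end.

Definition rKH (i : nat) : R := aKH i ^+ 2 / (2 * aKH i - b i ^+ 2).

Definition cKH (i : nat) : R :=
  \big[Num.max/0]_(1 <= j < i.+1) Num.max (b j ^+ 2) (rKH j).

End KH.

(** The update is a convex combination: when the clamp is inactive,
    σ_i² = (1 - λ) σ_{i-1}² + λ r_i with λ = b_i²(2a_i - b_i²)/a_i², and
    λ ∈ [0, 1] because a_i² - b_i²(2a_i - b_i²) = (a_i - b_i²)².  When the clamp
    is active, σ_i² = σ_{i-1}².  Either way an upper bound for σ_{i-1}² that
    also bounds r_i bounds σ_i², and c_i is such a bound since it is
    nondecreasing in i.  Everything hinges on b_i² <= b_i b_{max,i} < 2 a_i,
    which holds because 1/2 + log(2 n_in / δ) > 1/2. *)

From mathcomp Require Import all_boot all_order all_algebra.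
From mathcomp Require Import all_classical all_reals all_analysis.
From mathcomp Require Import ring lra.
Import Order.TTheory GRing.Theory Num.Theory.
Local Open Scope ring_scope.

Lemma sigma_update_le (R : realFieldType) (s B a c : R) :
  0 <= s -> s <= c -> 0 < B -> B < 2 * a -> a ^+ 2 / (2 * a - B) <= c ->
  s + B * Num.max 0 (1 + s / a ^+ 2 * (B - 2 * a)) <= c.
Proof.
move=> s_ge0 s_le_c B_gt0 B_lt_2a r_le_c.
have den_gt0 : 0 < 2 * a - B by lra.
have a_gt0 : 0 < a by lra.
have a2_gt0 : 0 < a ^+ 2 by rewrite exprn_gt0.
case: (lerP (1 + s / a ^+ 2 * (B - 2 * a)) 0) => _; first by rewrite mulr0 addr0.
set lam := B * (2 * a - B) / a ^+ 2.
have lam_ge0 : 0 <= lam.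
  by apply: divr_ge0; [apply: mulr_ge0|]; apply: ltW.
have lam_le1 : lam <= 1.
  by rewrite /lam ler_pdivrMr // mul1r; have := sqr_ge0 (a - B); nra.
have -> : s + B * (1 + s / a ^+ 2 * (B - 2 * a))
          = (1 - lam) * s + lam * (a ^+ 2 / (2 * a - B)).
  by rewrite /lam; field; rewrite !gt_eqF.
have -> : c = (1 - lam) * c + lam * c by ring.
by rewrite lerD // ler_wpM2l // subr_ge0.
Qed.

Section KernelHalving.
Variables (R : realType) (delta : R) (nin : nat) (b : nat -> R).
Hypotheses (delta_gt0 : 0 < delta) (delta_lt1 : delta < 1).
Hypothesis nin_gt0 : (0 < nin)%N.
Hypothesis b_gt0 : forall i, (1 <= i)%N -> 0 < b i.

Lemma ln_ratio_gt0 : 0 < ln (2 * nin%:R / delta).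
Proof.
rewrite ln_gt0 // ltr_pdivlMr // mul1r (lt_le_trans delta_lt1) //.
by rewrite -natrM ler1n muln_gt0 nin_gt0.
Qed.

Lemma b_le_bmax i : (1 <= i)%N -> b i <= bmax b i.
Proof.
by move=> i_ge1; apply: (le_bigmax_seq _ i); rewrite // mem_index_iota i_ge1 ltnSn.
Qed.

Lemma bbmax_lt_2aKH i : (1 <= i)%N -> b i * bmax b i < 2 * aKH delta nin b i.
Proof.
move=> i_ge1; rewrite /aKH.
have bb_gt0 : 0 < b i * bmax b i.
  by rewrite mulr_gt0 ?b_gt0 // (lt_le_trans (b_gt0 _ i_ge1)) ?b_le_bmax.
have := ln_ratio_gt0; have := bb_gt0; nra.
Qed.

Lemma b2_le_bbmax i : (1 <= i)%N -> b i ^+ 2 <= b i * bmax b i.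
Proof.
move=> i_ge1; rewrite expr2.
by apply: ler_wpM2l; [exact/ltW/b_gt0 | exact: b_le_bmax].
Qed.

Lemma b2_lt_2aKH i : (1 <= i)%N -> b i ^+ 2 < 2 * aKH delta nin b i.
Proof.
by move=> i_ge1; apply: le_lt_trans (bbmax_lt_2aKH _ i_ge1); apply: b2_le_bbmax.
Qed.

Lemma rKH_le_cKH i : (1 <= i)%N -> rKH delta nin b i <= cKH delta nin b i.
Proof.
move=> i_ge1; apply: (bigmax_sup_seq _ i); rewrite // ?le_max ?lexx ?orbT //.
by rewrite mem_index_iota i_ge1 ltnSn.
Qed.

Lemma cKH_le_cKHS i : cKH delta nin b i <= cKH delta nin b i.+1.
Proof. exact: le_bigmax_nat. Qed.

Lemma sigma2_ge0 i : 0 <= sigma2 delta nin b i.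
Proof.
elim: i => [|i IH] //=.
by apply: addr_ge0 => //; apply: mulr_ge0; rewrite ?sqr_ge0 // le_max lexx.
Qed.

Lemma sigma2_le_cKH i : sigma2 delta nin b i <= cKH delta nin b i.
Proof.
elim: i => [|i IH]; first by rewrite /cKH big_geq.
rewrite [sigma2 _ _ _ _]/=.
apply: sigma_update_le.
- exact: sigma2_ge0.
- exact: le_trans IH (cKH_le_cKHS i).
- exact/exprn_gt0/b_gt0.
- exact: b2_lt_2aKH.
- exact: rKH_le_cKH.
Qed.

Lemma rKH_le_bbmax i : (1 <= i)%N ->
  rKH delta nin b i <=
    aKH delta nin b i ^+ 2 / (2 * aKH delta nin b i - b i * bmax b i).
Proof.
move=> i_ge1; rewrite /rKH ler_wpM2l ?sqr_ge0 //.
have b2_lt := b2_lt_2aKH _ i_ge1; have bbmax_lt := bbmax_lt_2aKH _ i_ge1.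
by rewrite lef_pV2 ?posrE ?subr_gt0 // lerD2l lerN2 b2_le_bbmax.
Qed.

End KernelHalving.

Theorem lemmaB1 (R : realType) (delta : R) (nin : nat) (b : nat -> R) :
  0 < delta < 1 ->
  (2 <= nin)%N -> ~~ odd nin ->
  (forall i, (1 <= i)%N -> 0 < b i) ->
  forall i, (1 <= i)%N ->
    sigma2 delta nin b i <= cKH delta nin b i /\
    rKH delta nin b i <=
      aKH delta nin b i ^+ 2 / (2 * aKH delta nin b i - b i * bmax b i).
Proof.
move=> /andP[delta_gt0 delta_lt1] nin_ge2 _ b_gt0 i i_ge1.
have nin_gt0 : (0 < nin)%N by apply: leq_trans nin_ge2.
split; first exact: sigma2_le_cKH.
exact: rKH_le_bbmax.
Qed.
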